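(* Let $r,k,m$ be positive integers with $r\neq k$, and let $\alpha>\max\{k,r\}$ be real such that $\alpha-m$ is not a negative integer and $\alpha\neq m+r-j$, $\alpha\ne m+k-j$ for $j=1,\dots,m$. Then $$\sum_{n=1}^\infty\frac{H_{n+\alpha-m}}{(n+r)(n+k)}=\frac{k-\alpha}{k-r}\left\{\frac{H_{\alpha-k}^2+H_{\alpha-k}^{(2)}}{\alpha-k}-\sum_{j=1}^k\frac{H_{\alpha+j-k}}{j(\alpha+j-k)}\right\}+\frac{\alpha-r}{k-r}\left\{\frac{H_{\alpha-r}^2+H_{\alpha-r}^{(2)}}{\alpha-r}-\sum_{j=1}^r\frac{H_{\alpha+j-r}}{j(\alpha+j-r)}\right\}$$ $$-\frac{1}{k-r}\sum_{j=1}^m\left\{\frac{H_{j+\alpha-m}-H_r}{j+\alpha-m-r}-\frac{H_{j+\alpha-m}-H_k}{j+\alpha-m-k}\right\}.$$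
   Context: Shifted harmonic numbers: for a real $\alpha$ that is not a negative integer, $H_\alpha := \sum_{k=1}^\infty\left(\frac1k-\frac1{k+\alpha}\right)$ and, for integers $m\ge 2$, $H_\alpha^{(m)} := \sum_{k=1}^\infty\left(\frac1{k^m}-\frac1{(k+\alpha)^m}\right)=\zeta(m)-\zeta(m,\alpha+1)$, where $\zeta$ is the Riemann zeta function and $\zeta(s,\alpha+1)=\sum_{n=1}^\infty (n+\alpha)^{-s}$ is the Hurwitz zeta function. For nonnegative integers these are the ordinary harmonic numbers. Powers such as $H_\alpha^2$ mean $(H_\alpha)^2$. Empty sums are $0$. *)

From Stdlib Require Import Reals ClassicalEpsilon.
Open Scope R_scope.

(* The value of a convergent series sum_{n>=0} f n (chosen classically;
   meaningful when the series converges, which is the case for the uses below). *)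
Definition series (f : nat -> R) : R :=
  epsilon (inhabits 0) (fun l => infinite_sum f l).

(* Shifted harmonic number H_alpha = sum_{k>=1} (1/k - 1/(k+alpha)). *)
Definition Hsh (a : R) : R :=
  series (fun n => / INR (S n) - / (INR (S n) + a)).

Definition Hsh_m (m : nat) (a : R) : R :=
  series (fun n => / (INR (S n) ^ m) - / ((INR (S n) + a) ^ m)).

Fixpoint sum1 (n : nat) (f : nat -> R) : R :=
  match n with
  | O => 0
  | S p => sum1 p f + f (S p)
  end.

(* Write H_(n+a-m) = H_(n+a) - sum_(j=1..m) 1/(n+a-m+j).  The m correction terms are the
   series sum_n 1/((n+c)(n+r)(n+k)), which partial fractions turn into differences of
   harmonic numbers: this is the last sum of the formula.  For the main part,
   1/((n+r)(n+k)) = ((1/n - 1/(n+k)) - (1/n - 1/(n+r))) / (k-r) reduces everything to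
   W_s(a) = sum_n H_(n+a) (1/n - 1/(n+s)).  The increment W_(s+1)(a) - W_s(a) is summed by
   parts, using H_(n+a) = o(n), and induction on s gives
   W_s(a) = H_a^2 + H_a^(2) - (a-s) B_s(a), where B_s(a) is the expression in braces. *)

From Stdlib Require Import Reals Lra Lia Psatz ClassicalEpsilon.
From Coquelicot Require Import Coquelicot.
Open Scope R_scope.

Lemma sum1_eq n f g :
  (forall j, (1 <= j <= n)%nat -> f j = g j) -> sum1 n f = sum1 n g.
Proof.
  intro H; induction n as [|n IH]; simpl; [reflexivity|].
  rewrite IH, H; [reflexivity | lia | intros; apply H; lia].
Qed.

Lemma sum1_minus n f g : sum1 n (fun j => f j - g j) = sum1 n f - sum1 n g.
Proof. induction n as [|n IH]; simpl; [ring | rewrite IH; ring]. Qed.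

Lemma sum1_scal n c f : sum1 n (fun j => c * f j) = c * sum1 n f.
Proof. induction n as [|n IH]; simpl; [ring | rewrite IH; ring]. Qed.

Lemma sum1_S_l n f : sum1 (S n) f = f 1%nat + sum1 n (fun i => f (S i)).
Proof.
  induction n as [|n IH]; [simpl; ring|].
  change (sum1 (S (S n)) f) with (sum1 (S n) f + f (S (S n))).
  rewrite IH; simpl; ring.
Qed.

Lemma sum1_sum_f_R0 n f : sum1 (S n) f = sum_f_R0 (fun i => f (S i)) n.
Proof. induction n as [|n IH]; simpl; [ring | now rewrite <- IH]. Qed.

Lemma INR_S_pos n : 0 < INR (S n).
Proof. apply lt_0_INR; lia. Qed.

(* Coquelicot's generic series lemmas restated over [R], so that the resulting goals are
   equations in [R] built from [Rplus]/[Rmult] on which [ring] and [field] work. *)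
Lemma is_series_ext_R (a b : nat -> R) (l : R) :
  (forall n, a n = b n) -> is_series a l -> is_series b l.
Proof. apply is_series_ext. Qed.

Lemma is_series_Rplus (a b : nat -> R) (la lb : R) :
  is_series a la -> is_series b lb -> is_series (fun n => a n + b n) (la + lb).
Proof. intros; now apply (is_series_plus a b). Qed.

Lemma is_series_Rminus (a b : nat -> R) (la lb : R) :
  is_series a la -> is_series b lb -> is_series (fun n => a n - b n) (la - lb).
Proof. intros; now apply (is_series_minus a b). Qed.

Lemma is_series_Rmult_l (c : R) (a : nat -> R) (la : R) :
  is_series a la -> is_series (fun n => c * a n) (c * la).
Proof. intros; now apply (is_series_scal c a). Qed.

Lemma is_series_telescope (b : nat -> R) (l : R) :
  is_lim_seq b l -> is_series (fun n => b n - b (S n)) (b O - l).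
Proof.
  intro Hb.
  assert (Hpartial : forall N, sum_n (fun n => b n - b (S n)) N = b O - b (S N)).
  { induction N as [|N IH]; [now rewrite sum_O|].
    rewrite sum_Sn, IH; unfold plus; simpl; ring. }
  assert (Hlim : is_lim_seq (fun N => b O - b (S N)) (b O - l)).
  { apply is_lim_seq_minus'; [apply is_lim_seq_const | now apply (is_lim_seq_incr_1 b l)]. }
  exact (is_lim_seq_ext _ _ _ (fun N => eq_sym (Hpartial N)) Hlim).
Qed.

Lemma is_series_zero : is_series (fun _ => 0) 0.
Proof.
  pose proof (is_series_telescope (fun _ => 0) 0 (is_lim_seq_const 0)) as H.
  rewrite Rminus_0_r in H.
  exact (is_series_ext_R _ _ _ (fun _ => Rminus_0_r 0) H).
Qed.

Lemma is_series_sum1 m (F : nat -> nat -> R) (L : nat -> R) :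
  (forall j, (1 <= j <= m)%nat -> is_series (F j) (L j)) ->
  is_series (fun n => sum1 m (fun j => F j n)) (sum1 m L).
Proof.
  induction m as [|m IH]; intro H; simpl; [apply is_series_zero|].
  apply (is_series_Rplus (fun n => sum1 m (fun j => F j n)) (F (S m))).
  - apply IH; intros; apply H; lia.
  - apply H; lia.
Qed.

Lemma is_series_series (f : nat -> R) : ex_series f -> is_series f (series f).
Proof.
  intros [l Hl]; unfold series; apply is_series_Reals, epsilon_spec.
  exists l; now apply is_series_Reals.
Qed.

Lemma is_lim_seq_inv_shift (y : R) : is_lim_seq (fun n => / (INR (S n) + y)) 0.
Proof.
  replace (Finite 0) with (Rbar_inv p_infty) by reflexivity.
  apply (is_lim_seq_inv (fun n => INR (S n) + y)); [|discriminate].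
  eapply is_lim_seq_plus; [apply (is_lim_seq_incr_1 INR p_infty), is_lim_seq_INR
                          | apply is_lim_seq_const | easy].
Qed.

Lemma ex_series_inv_consecutive : ex_series (fun n => / (INR (S n) * (INR (S n) + 1))).
Proof.
  exists (/ INR (S O) - 0).
  apply (is_series_ext_R (fun n => / INR (S n) - / INR (S (S n)))).
  - intro n; rewrite (S_INR (S n)); pose proof (INR_S_pos n); field; lra.
  - apply (is_series_telescope (fun n => / INR (S n))).
    apply (is_lim_seq_ext (fun n => / (INR (S n) + 0))); [intro; now rewrite Rplus_0_r|].
    apply is_lim_seq_inv_shift.
Qed.

Lemma ex_series_bounded_by_consecutive (u : nat -> R) (c : R) (N : nat) :
  (forall n, (N <= n)%nat -> Rabs (u n) <= c / (INR (S n) * (INR (S n) + 1))) ->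
  ex_series u.
Proof.
  intro Hu; apply (ex_series_incr_n _ N).
  apply (ex_series_le (V := R_CompleteNormedModule) _
           (fun n => c * / (INR (S (N + n)) * (INR (S (N + n)) + 1)))).
  - intro n; apply Hu; lia.
  - destruct ex_series_inv_consecutive as [l Hl].
    apply (ex_series_incr_n (fun n => c * / (INR (S n) * (INR (S n) + 1))) N).
    exists (c * l); now apply is_series_Rmult_l.
Qed.

Definition not_neg_int (y : R) : Prop := forall n, INR (S n) + y <> 0.

Lemma not_neg_int_ge0 y : 0 <= y -> not_neg_int y.
Proof. intros Hy n; pose proof (INR_S_pos n); lra. Qed.

Lemma not_neg_int_succ y : not_neg_int y -> not_neg_int (y + 1).
Proof.
  intros Hy n; replace (INR (S n) + (y + 1)) with (INR (S (S n)) + y)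
    by (rewrite (S_INR (S n)); ring); apply Hy.
Qed.

Lemma not_neg_int_add_nat y m : not_neg_int y -> not_neg_int (y + INR m).
Proof.
  intro Hy; induction m as [|m IH]; [now rewrite Rplus_0_r|].
  rewrite S_INR, <- Rplus_assoc; now apply not_neg_int_succ.
Qed.

Lemma is_series_Hsh y :
  not_neg_int y -> is_series (fun n => / INR (S n) - / (INR (S n) + y)) (Hsh y).
Proof.
  intro Hy; apply is_series_series.
  destruct (nfloor_ex (2 * Rabs y + 1)) as [N HN]; [pose proof (Rabs_pos y); lra|].
  apply (ex_series_bounded_by_consecutive _ (4 * Rabs y) N).
  intros n Hn; set (X := INR (S n)).
  assert (HX : 2 * Rabs y + 1 < X).
  { apply le_INR in Hn; unfold X; rewrite S_INR; lra. }
  assert (HXy : X / 2 <= Rabs (X + y)).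
  { clear -HX; unfold Rabs in *; destruct (Rcase_abs (X + y)), (Rcase_abs y); lra. }
  assert (Hy0 : 0 <= Rabs y) by apply Rabs_pos.
  replace (/ X - / (X + y)) with (y / (X * (X + y))) by (field; split; [apply Hy | lra]).
  unfold Rdiv; rewrite Rabs_mult, Rabs_inv, Rabs_mult, (Rabs_right X) by lra.
  rewrite (Rmult_comm 4 (Rabs y)), Rmult_assoc; apply Rmult_le_compat_l; [exact Hy0|].
  rewrite <- (Rinv_inv 4), <- Rinv_mult.
  apply Rinv_le_contravar; [|nra].
  apply Rmult_lt_0_compat; [lra | nra].
Qed.

Lemma is_series_Hsh_m2 y :
  0 < y -> is_series (fun n => / (INR (S n) ^ 2) - / ((INR (S n) + y) ^ 2)) (Hsh_m 2 y).
Proof.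
  intro Hy; apply is_series_series.
  apply (ex_series_bounded_by_consecutive _ 2 0); intros n _.
  pose proof (INR_S_pos n); assert (1 <= INR (S n)) by (rewrite S_INR; pose proof (pos_INR n); lra).
  set (X := INR (S n)) in *.
  assert (Hlt : / ((X + y) ^ 2) <= / (X ^ 2)) by (apply Rinv_le_contravar; nra).
  assert (Hpos : 0 < / ((X + y) ^ 2)) by (apply Rinv_0_lt_compat; nra).
  rewrite Rabs_right by lra.
  apply Rle_trans with (/ X ^ 2); [lra|].
  unfold Rdiv; rewrite <- (Rinv_inv 2), <- Rinv_mult.
  apply Rinv_le_contravar; nra.
Qed.

Lemma series_shift_succ (u : nat -> R) (f : R -> R) (y A B : R) :
  is_lim_seq (fun n => f (INR (S n) + y)) 0 ->
  is_series (fun n => u n - f (INR (S n) + y)) A ->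
  is_series (fun n => u n - f (INR (S n) + (y + 1))) B ->
  B = A + f (y + 1).
Proof.
  intros Hf HA HB.
  pose proof (is_series_telescope _ _ Hf) as Htel.
  pose proof (is_series_Rminus _ _ _ _ HB HA) as Hdiff.
  apply (is_series_ext_R _ (fun n => f (INR (S n) + y) - f (INR (S (S n)) + y))) in Hdiff.
  - apply is_series_unique in Htel; apply is_series_unique in Hdiff.
    replace (INR 1 + y) with (y + 1) in Htel by (simpl; ring); lra.
  - intro n; replace (INR (S (S n)) + y) with (INR (S n) + (y + 1))
      by (rewrite (S_INR (S n)); ring); ring.
Qed.

Lemma Hsh_succ y : not_neg_int y -> Hsh (y + 1) = Hsh y + / (y + 1).
Proof.
  intro Hy; apply (series_shift_succ (fun n => / INR (S n)) Rinv y).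
  - apply is_lim_seq_inv_shift.
  - now apply is_series_Hsh.
  - now apply is_series_Hsh, not_neg_int_succ.
Qed.

Lemma Hsh_m2_succ y : 0 < y -> Hsh_m 2 (y + 1) = Hsh_m 2 y + / ((y + 1) ^ 2).
Proof.
  intro Hy; apply (series_shift_succ (fun n => / (INR (S n) ^ 2)) (fun x => / x ^ 2) y).
  - apply (is_lim_seq_ext (fun n => / (INR (S n) + y) * / (INR (S n) + y))).
    { intro n; pose proof (INR_S_pos n); field; lra. }
    replace 0 with (0 * 0) by ring.
    apply is_lim_seq_mult'; apply is_lim_seq_inv_shift.
  - now apply is_series_Hsh_m2.
  - apply is_series_Hsh_m2; lra.
Qed.

Lemma Hsh_add_nat y m :
  not_neg_int y -> Hsh (y + INR m) = Hsh y + sum1 m (fun j => / (y + INR j)).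
Proof.
  intro Hy; induction m as [|m IH]; [simpl; now rewrite !Rplus_0_r|].
  cbn [sum1]; rewrite S_INR, <- Rplus_assoc, Hsh_succ, IH by now apply not_neg_int_add_nat.
  ring.
Qed.

Lemma Hsh_0 : Hsh 0 = 0.
Proof.
  pose proof (is_series_Hsh 0 (not_neg_int_ge0 0 (Rle_refl 0))) as H.
  apply (is_series_ext_R _ (fun _ => 0)) in H; [|intro; rewrite Rplus_0_r; ring].
  apply is_series_unique in H; pose proof (is_series_unique _ _ is_series_zero); lra.
Qed.

Lemma is_series_inv_pair c t :
  not_neg_int c -> not_neg_int t -> c <> t ->
  is_series (fun n => / ((INR (S n) + c) * (INR (S n) + t))) ((Hsh c - Hsh t) / (c - t)).
Proof.
  intros Hc Ht Hct.
  replace ((Hsh c - Hsh t) / (c - t)) with (/ (t - c) * (Hsh t - Hsh c))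
    by (field; split; intro; apply Hct; lra).
  eapply is_series_ext_R; [|exact (is_series_Rmult_l (/ (t - c)) _ _
             (is_series_Rminus _ _ _ _ (is_series_Hsh t Ht) (is_series_Hsh c Hc)))].
  intro n; cbv beta; pose proof (Hc n); pose proof (Ht n); pose proof (INR_S_pos n).
  field; repeat split; auto; intro; lra.
Qed.

Lemma is_series_inv_triple c r k :
  not_neg_int c -> not_neg_int r -> not_neg_int k -> c <> r -> c <> k -> r <> k ->
  is_series (fun n => / ((INR (S n) + c) * (INR (S n) + r) * (INR (S n) + k)))
    (/ (k - r) * ((Hsh c - Hsh r) / (c - r) - (Hsh c - Hsh k) / (c - k))).
Proof.
  intros Hc Hr Hk Hcr Hck Hrk.
  eapply is_series_ext_R; [|exact (is_series_Rmult_l (/ (k - r)) _ _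
      (is_series_Rminus _ _ _ _ (is_series_inv_pair c r Hc Hr Hcr) (is_series_inv_pair c k Hc Hk Hck)))].
  intro n; cbv beta; pose proof (Hc n); pose proof (Hr n); pose proof (Hk n).
  field; repeat split; auto; intro; apply Hrk; lra.
Qed.

Lemma is_lim_seq_Hsh_div a t :
  0 < a -> 0 <= t -> is_lim_seq (fun N => Hsh (INR (S N) + a) / (INR (S (S N)) + t)) 0.
Proof.
  intros Ha Ht.
  set (Hpart := fun N => sum_f_R0 (fun i => / (a + INR (S i))) N).
  set (harm := fun N => sum_f_R0 (fun i => / INR (S i)) N).
  apply (is_lim_seq_ext (fun N => Hsh a / (INR (S (S N)) + t) + Hpart N / (INR (S (S N)) + t))).
  { intro N; rewrite (Rplus_comm _ a), Hsh_add_nat, sum1_sum_f_R0 by (apply not_neg_int_ge0; lra).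
    unfold Hpart, Rdiv; ring. }
  replace (Finite 0) with (Finite (0 + 0)) by (f_equal; ring).
  apply is_lim_seq_plus'.
  { replace 0 with (Hsh a * 0) by ring.
    apply (is_lim_seq_mult' (fun _ => Hsh a)); [apply is_lim_seq_const|].
    apply (is_lim_seq_incr_1 (fun N => / (INR (S N) + t)) 0), is_lim_seq_inv_shift. }
  (* the partial sums of the shifted harmonic series are dominated by the ordinary
     harmonic numbers, which are o(N) by Cesaro *)
  apply (is_lim_seq_le_le (fun _ => 0) _ (fun N => harm N / INR (S N))).
  2: apply is_lim_seq_const.
  2: { apply (is_lim_seq_incr_1 (fun N => harm (pred N) / INR N)), is_lim_seq_Reals, Cesaro_1.
       apply is_lim_seq_Reals.
       apply (is_lim_seq_ext (fun n => / (INR (S n) + 0))); [intro; now rewrite Rplus_0_r|].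
       apply is_lim_seq_inv_shift. }
  intro N.
  assert (Hpos : 0 <= Hpart N).
  { apply cond_pos_sum; intro i; pose proof (INR_S_pos i); apply Rlt_le, Rinv_0_lt_compat; lra. }
  assert (Hle : Hpart N <= harm N).
  { apply sum_Rle; intros i _; pose proof (INR_S_pos i); apply Rinv_le_contravar; lra. }
  pose proof (INR_S_pos N); rewrite (S_INR (S N)).
  assert (Hinv : 0 < / (INR (S N) + 1 + t)) by (apply Rinv_0_lt_compat; lra).
  assert (Hinv_le : / (INR (S N) + 1 + t) <= / INR (S N)) by (apply Rinv_le_contravar; lra).
  unfold Rdiv; split; [nra|].
  apply Rle_trans with (harm N * / (INR (S N) + 1 + t)); [nra|].
  apply Rmult_le_compat_l; lra.
Qed.

Lemma Hsh_S_add n a : 0 <= a -> Hsh (INR (S n) + a) = Hsh (INR n + a) + / (INR (S n) + a).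
Proof.
  intro Ha; rewrite S_INR; replace (INR n + 1 + a) with ((INR n + a) + 1) by ring.
  apply Hsh_succ, not_neg_int_ge0; pose proof (pos_INR n); lra.
Qed.

(* Abel summation; the boundary term [H_(N+1+a) / (N+2+t)] vanishes. *)
Lemma is_series_Hsh_by_parts a t :
  0 < a -> 0 <= t -> a <> t ->
  is_series (fun n => Hsh (INR (S n) + a) * (/ (INR (S n) + t) - / (INR (S n) + t + 1)))
    (Hsh a / (t + 1) + (Hsh a - Hsh t) / (a - t)).
Proof.
  intros Ha Ht Hat.
  set (term := fun n => Hsh (INR (S n) + a) * (/ (INR (S n) + t) - / (INR (S n) + t + 1))).
  set (q := fun n => / ((INR (S n) + a) * (INR (S n) + t))).
  assert (Hpartial : forall N, @eq R (sum_n term N)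
     (Hsh a / (t + 1) + sum_n q N - Hsh (INR (S N) + a) / (INR (S (S N)) + t))).
  { induction N as [|N IH].
    - rewrite !sum_O; unfold term, q; rewrite (Hsh_S_add 0) by lra.
      simpl INR; rewrite Rplus_0_l; field; repeat split; intro; lra.
    - rewrite !sum_Sn, IH; change (plus ?x ?y) with (Rplus x y); unfold term, q.
      rewrite (Hsh_S_add (S N)) by lra.
      rewrite (S_INR (S (S N))), (S_INR (S N)); pose proof (INR_S_pos N).
      field; repeat split; intro; lra. }
  assert (Hlim : is_lim_seq (fun N => Hsh a / (t + 1) + sum_n q N
                                      - Hsh (INR (S N) + a) / (INR (S (S N)) + t))
                   (Hsh a / (t + 1) + (Hsh a - Hsh t) / (a - t) - 0)).
  { apply is_lim_seq_minus'; [apply is_lim_seq_plus'; [apply is_lim_seq_const|]|].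
    - apply is_series_inv_pair; [apply not_neg_int_ge0; lra | apply not_neg_int_ge0 | ]; assumption.
    - now apply is_lim_seq_Hsh_div. }
  rewrite Rminus_0_r in Hlim.
  exact (is_lim_seq_ext _ _ _ (fun N => eq_sym (Hpartial N)) Hlim).
Qed.

Definition harmonic_brace (a : R) (s : nat) : R :=
  (Hsh (a - INR s) ^ 2 + Hsh_m 2 (a - INR s)) / (a - INR s)
  - sum1 s (fun j => Hsh (a + INR j - INR s) / (INR j * (a + INR j - INR s))).

Lemma sum1_Hsh_inv_consecutive x s :
  0 < x ->
  Hsh x / x + Hsh x - sum1 s (fun i => Hsh (x + INR i) / (INR i * (INR i + 1)))
  = Hsh (x + INR s) / (INR s + 1) + (Hsh (x + INR s) - Hsh (INR s)) / x.
Proof.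
  intro Hx; induction s as [|s IH].
  - simpl; rewrite Rplus_0_r, Hsh_0; field; lra.
  - cbn [sum1]; pose proof (pos_INR s).
    replace (Hsh x / x + Hsh x - (sum1 s (fun i => Hsh (x + INR i) / (INR i * (INR i + 1)))
                                  + Hsh (x + INR (S s)) / (INR (S s) * (INR (S s) + 1))))
      with (Hsh (x + INR s) / (INR s + 1) + (Hsh (x + INR s) - Hsh (INR s)) / x
            - Hsh (x + INR (S s)) / (INR (S s) * (INR (S s) + 1))) by (rewrite <- IH; ring).
    rewrite S_INR, <- Rplus_assoc, !Hsh_succ by (apply not_neg_int_ge0; lra).
    field; repeat split; intro; lra.
Qed.

(* With [x = a - s], the coefficient of [H_(x+i)] in the difference of the two sums is
   [x / (i (x+i)) - (x-1) / ((i+1) (x+i)) = 1 / (i (i+1))], which brings in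
   [sum1_Hsh_inv_consecutive]. *)
Lemma harmonic_brace_step a s :
  INR (S s) < a ->
  (a - INR s) * harmonic_brace a s - (a - INR (S s)) * harmonic_brace a (S s)
  = Hsh a / (INR s + 1) + (Hsh a - Hsh (INR s)) / (a - INR s).
Proof.
  intro Ha; rewrite S_INR in Ha; pose proof (pos_INR s).
  set (x := a - INR s); assert (Hx : 1 < x) by (unfold x; lra).
  set (F1 := fun i => Hsh (x + INR i) / (INR i * (x + INR i))).
  set (F2 := fun i => Hsh (x + INR i) / (INR (S i) * (x + INR i))).
  set (F3 := fun i => Hsh (x + INR i) / (INR i * (INR i + 1))).
  assert (Hbrace : x * harmonic_brace a s = Hsh x ^ 2 + Hsh_m 2 x - x * sum1 s F1).
  { unfold harmonic_brace; fold x.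
    rewrite (sum1_eq s _ F1); [field; lra|].
    intros j _; unfold F1; now replace (a + INR j - INR s) with (x + INR j) by (unfold x; ring). }
  assert (Hbrace_S : (a - INR (S s)) * harmonic_brace a (S s)
                     = Hsh (x - 1) ^ 2 + Hsh_m 2 (x - 1) - (x - 1) * (Hsh x / x + sum1 s F2)).
  { unfold harmonic_brace.
    replace (a - INR (S s)) with (x - 1) by (unfold x; rewrite S_INR; ring).
    rewrite sum1_S_l, (sum1_eq s _ F2).
    - replace (a + INR 1 - INR (S s)) with x by (unfold x; rewrite (S_INR s); simpl; ring).
      simpl INR; field; lra.
    - intros j _; unfold F2.
      now replace (a + INR (S j) - INR (S s)) with (x + INR j) by (unfold x; rewrite !S_INR; ring). }
  assert (Hsums : x * sum1 s F1 - (x - 1) * sum1 s F2 = sum1 s F3).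
  { rewrite <- !sum1_scal, <- sum1_minus; apply sum1_eq; intros i Hi.
    assert (0 < INR i) by (apply lt_0_INR; lia).
    unfold F1, F2, F3; rewrite S_INR; field; repeat split; intro; lra. }
  assert (Hsucc : Hsh x = Hsh (x - 1) + / x).
  { replace x with ((x - 1) + 1) at 1 3 by ring; apply Hsh_succ, not_neg_int_ge0; lra. }
  assert (Hsucc2 : Hsh_m 2 x = Hsh_m 2 (x - 1) + / (x ^ 2)).
  { replace x with ((x - 1) + 1) at 1 3 by ring; apply Hsh_m2_succ; lra. }
  pose proof (sum1_Hsh_inv_consecutive x s ltac:(lra)) as Hcons; fold F3 in Hcons.
  replace (x + INR s) with a in Hcons by (unfold x; ring).
  rewrite Hbrace, Hbrace_S, Hsucc2, <- Hcons, <- Hsums.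
  replace (Hsh (x - 1)) with (Hsh x - / x) by lra.
  field; lra.
Qed.

Lemma is_series_Hsh_weighted a s :
  INR s < a ->
  is_series (fun n => Hsh (INR (S n) + a) * (/ INR (S n) - / (INR (S n) + INR s)))
    (Hsh a ^ 2 + Hsh_m 2 a - (a - INR s) * harmonic_brace a s).
Proof.
  induction s as [|s IH]; intro Ha.
  - replace (Hsh a ^ 2 + Hsh_m 2 a - (a - INR 0) * harmonic_brace a 0) with 0
      by (unfold harmonic_brace; simpl in *; rewrite Rminus_0_r; field; lra).
    apply (is_series_ext_R (fun _ => 0)); [|exact is_series_zero].
    intro n; simpl INR; rewrite Rplus_0_r; ring.
  - pose proof (pos_INR s).
    pose proof (harmonic_brace_step a s Ha) as Hstep; rewrite S_INR in Ha.
    replace (Hsh a ^ 2 + Hsh_m 2 a - (a - INR (S s)) * harmonic_brace a (S s))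
      with (Hsh a ^ 2 + Hsh_m 2 a - (a - INR s) * harmonic_brace a s
            + (Hsh a / (INR s + 1) + (Hsh a - Hsh (INR s)) / (a - INR s))) by lra.
    eapply is_series_ext_R;
      [|exact (is_series_Rplus _ _ _ _ (IH ltac:(lra))
                 (is_series_Hsh_by_parts a (INR s) ltac:(lra) ltac:(lra) ltac:(lra)))].
    intro n; cbv beta; rewrite (S_INR s), <- Rplus_assoc; ring.
Qed.

Lemma is_series_Hsh_over_quadratic a r k :
  INR r < a -> INR k < a -> r <> k ->
  is_series (fun n => Hsh (INR (S n) + a) / ((INR (S n) + INR r) * (INR (S n) + INR k)))
    ((INR k - a) / (INR k - INR r) * harmonic_brace a k
     + (a - INR r) / (INR k - INR r) * harmonic_brace a r).
Proof.
  intros Hr Hk Hrk.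
  assert (Hkr : INR k - INR r <> 0) by (intro E; apply Hrk, INR_eq; lra).
  replace ((INR k - a) / (INR k - INR r) * harmonic_brace a k
           + (a - INR r) / (INR k - INR r) * harmonic_brace a r)
    with (/ (INR k - INR r) *
          ((Hsh a ^ 2 + Hsh_m 2 a - (a - INR k) * harmonic_brace a k)
           - (Hsh a ^ 2 + Hsh_m 2 a - (a - INR r) * harmonic_brace a r)))
    by (field; exact Hkr).
  eapply is_series_ext_R;
    [|exact (is_series_Rmult_l _ _ _ (is_series_Rminus _ _ _ _
               (is_series_Hsh_weighted a k Hk) (is_series_Hsh_weighted a r Hr)))].
  intro n; cbv beta; pose proof (INR_S_pos n); pose proof (pos_INR r); pose proof (pos_INR k).
  field; repeat split; auto; intro; lra.
Qed.

Lemma Hsh_div_sub_nat y m D :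
  not_neg_int y -> Hsh y / D = Hsh (y + INR m) / D - sum1 m (fun j => / ((y + INR j) * D)).
Proof.
  intro Hy; rewrite Hsh_add_nat by exact Hy.
  rewrite (sum1_eq m (fun j => / ((y + INR j) * D)) (fun j => / D * / (y + INR j)))
    by (intros; rewrite Rinv_mult; ring).
  rewrite sum1_scal; unfold Rdiv; ring.
Qed.

Theorem corollary2p3 (r k m : nat) (alpha : R)
  (hr : (1 <= r)%nat) (hk : (1 <= k)%nat) (hm : (1 <= m)%nat)
  (hrk : r <> k)
  (ha : alpha > Rmax (INR k) (INR r))
  (hneg : forall j : nat, alpha - INR m <> - INR (S j))
  (hjr : forall j : nat, (1 <= j <= m)%nat -> alpha <> INR m + INR r - INR j)
  (hjk : forall j : nat, (1 <= j <= m)%nat -> alpha <> INR m + INR k - INR j) :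
  infinite_sum
    (fun n => Hsh (INR (S n) + alpha - INR m)
              / ((INR (S n) + INR r) * (INR (S n) + INR k)))
    ( (INR k - alpha) / (INR k - INR r) *
        ( (Hsh (alpha - INR k) ^ 2 + Hsh_m 2 (alpha - INR k)) / (alpha - INR k)
          - sum1 k (fun j => Hsh (alpha + INR j - INR k)
                             / (INR j * (alpha + INR j - INR k))) )
    + (alpha - INR r) / (INR k - INR r) *
        ( (Hsh (alpha - INR r) ^ 2 + Hsh_m 2 (alpha - INR r)) / (alpha - INR r)
          - sum1 r (fun j => Hsh (alpha + INR j - INR r)
                             / (INR j * (alpha + INR j - INR r))) )
    - / (INR k - INR r) *
        sum1 m (fun j =>
          (Hsh (INR j + alpha - INR m) - Hsh (INR r)) / (INR j + alpha - INR m - INR r)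
          - (Hsh (INR j + alpha - INR m) - Hsh (INR k)) / (INR j + alpha - INR m - INR k)) ).
Proof.
  assert (Hka : INR k < alpha) by (pose proof (Rmax_l (INR k) (INR r)); lra).
  assert (Hra : INR r < alpha) by (pose proof (Rmax_r (INR k) (INR r)); lra).
  assert (Hshift : forall p, not_neg_int (INR p + alpha - INR m)).
  { intros p n E; apply (hneg (n + p)%nat).
    rewrite S_INR, plus_INR; rewrite S_INR in E; lra. }
  assert (HA := is_series_Hsh_over_quadratic alpha r k Hra Hka hrk).
  assert (HB := is_series_sum1 m
    (fun j n => / ((INR (S n) + (INR j + alpha - INR m)) * (INR (S n) + INR r) * (INR (S n) + INR k)))
    _ (fun j Hj => is_series_inv_triple _ _ _ (Hshift j)
         (not_neg_int_ge0 _ (pos_INR r)) (not_neg_int_ge0 _ (pos_INR k))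
         (fun E => hjr j Hj ltac:(lra)) (fun E => hjk j Hj ltac:(lra))
         (fun E => hrk (INR_eq _ _ E)))).
  apply is_series_Reals; rewrite <- sum1_scal.
  eapply is_series_ext_R; [|exact (is_series_Rminus _ _ _ _ HA HB)].
  intro n; cbv beta.
  rewrite (Hsh_div_sub_nat _ m _ (Hshift (S n))).
  replace (INR (S n) + alpha - INR m + INR m) with (INR (S n) + alpha) by ring.
  f_equal; apply sum1_eq; intros j _; f_equal; ring.
Qed.
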